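(* In the coprime construction of the hider strategy $y$, let $v$ be the first node of a segment. Then $g(v-1)\le y([1,v-1])$ and $g(v+r-1)\le y([1,v-1])+\frac1w$ (i.e., the segment rule holds for $r^*=r$).
   Context: Let $k\ge2$, $n>2^k$, $c=2^k-2$ with $\gcd(c,n-1)=1$, and let $h,w$ be the positive integers with $h(n-1)-wc=1$ and $w\in\{1,\dots,n-2\}$ minimal. Let $g(v)=v\frac{h}{wc}$, $r=\lfloor c/h\rfloor$. For integers $a\le b$, $[a,b]=\{a,\dots,b\}$ (empty if $a>b$), and $y(S)=\sum_{i\in S}y_i$. Construction of $y\in\mathbb{R}^{\{0,\dots,n-1\}}$: $y_0=y_{n-1}=0$; starting at $v=1$, repeatedly choose the largest $r^*\in\{r,r+1\}$ satisfying the segment rule $g(v+r^*-1)\le y([1,v-1])+\frac1w$, set $y_i=\frac{1}{r^*w}$ for $i\in\{v,\dots,v+r^*-1\}$ (the set $\{v,\dots,v+r^*-1\}$ is called a segment, with first node $v$), and replace $v$ by $v+r^*$; stop when $v>n-2$. *)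

From HB Require Import structures.
From mathcomp Require Import all_boot all_order all_algebra.
Set Implicit Arguments. Unset Strict Implicit. Unset Printing Implicit Defensive.
Import Order.TTheory GRing.Theory Num.Theory.
Local Open Scope ring_scope.

(* Parameters: n (number of nodes 0..n-1), h, w, c (= 2^k - 2). *)

Definition gfun (h w c : nat) (v : nat) : rat := (v%:R * h%:R) / (w * c)%:R.

Definition rpar (c h : nat) : nat := (c %/ h)%N.

Definition ypre (y : nat -> rat) (v : nat) : rat := \sum_(1 <= i < v) y i.

Definition seg_rule (h w c : nat) (y : nat -> rat) (v rs : nat) : bool :=
  gfun h w c (v + rs - 1) <= ypre y v + (w%:R)^-1.

(* largest r* in {r, r+1} satisfying the segment rule
   (defaults to r if r+1 fails; the lemma shows r always satisfies it) *)
Definition rstar (h w c : nat) (y : nat -> rat) (v : nat) : nat :=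
  let r := rpar c h in
  if seg_rule h w c y v r.+1 then r.+1 else r.

Definition assign (w : nat) (y : nat -> rat) (v rs : nat) : nat -> rat :=
  fun i => if ((v <= i) && (i < v + rs))%N then ((rs * w)%:R)^-1 else y i.

Fixpoint build (n h w c : nat) (fuel : nat) (v : nat) (y : nat -> rat)
  : (nat -> rat) * seq nat :=
  match fuel with
  | 0 => (y, [::])
  | fuel'.+1 =>
      if (n - 2 < v)%N then (y, [::])
      else let rs := rstar h w c y v in
           let p := build n h w c fuel' (v + rs) (assign w y v rs) in
           (p.1, v :: p.2)
  end.

Definition hider_y (n h w c : nat) : nat -> rat :=
  fun i => if ((1 <= i) && (i <= n - 2))%N
           then (build n h w c n 1 (fun _ => 0)).1 i else 0.

Definition first_nodes (n h w c : nat) : seq nat :=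
  (build n h w c n 1 (fun _ => 0)).2.

(* Invariant: at the first node v of every segment, g(v-1) <= y([1,v-1]).  Since
   r h <= c, advancing by r nodes raises g by at most 1/w, so the rule holds for
   r* = r; a segment of length r* adds exactly 1/w to the prefix sum while g(v-1)
   moves to g(v+r*-1), which the rule bounds, so the invariant propagates. *)
From HB Require Import structures.
From mathcomp Require Import all_boot all_order all_algebra.
Import Order.TTheory GRing.Theory Num.Theory.
Local Open Scope ring_scope.

Lemma gfun_add_rpar (h w c u : nat) :
  gfun h w c (u + rpar c h) <= gfun h w c u + (w%:R)^-1.
Proof.
rewrite /gfun natrD !mulrDl lerD //.
(* when w c = 0, g is identically 0 since x / 0 = 0 *)
have [->|wc_gt0] := posnP (w * c); first by rewrite invr0 mulr0 invr_ge0.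
have /andP[w_gt0 _] : (0 < w)%N && (0 < c)%N by rewrite -muln_gt0.
rewrite ler_pdivrMr ?ltr0n // natrM mulrA mulVf ?pnatr_eq0 -?lt0n // mul1r.
by rewrite -natrM ler_nat leq_divM.
Qed.

Lemma seg_rule_rpar (h w c v : nat) (P : rat) : (1 <= v)%N ->
  gfun h w c (v - 1) <= P -> gfun h w c (v + rpar c h - 1) <= P + (w%:R)^-1.
Proof.
move=> v_ge1 le_gP.
rewrite addnC -addnBA // addnC.
exact: le_trans (gfun_add_rpar _ _ _ _) (lerD le_gP (lexx _)).
Qed.

Lemma ypre_assign (w : nat) (y : nat -> rat) (v rs : nat) : (1 <= v)%N ->
  ypre (assign w y v rs) (v + rs) = ypre y v + (if rs == 0%N then 0 else (w%:R)^-1).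
Proof.
move=> v_ge1; rewrite /ypre (@big_cat_nat _ _ _ v 1 (v + rs) _ _ v_ge1 (leq_addr _ _)) /=.
congr (_ + _).
  by apply: eq_big_nat => i /andP[_ lt_iv]; rewrite /assign leqNgt lt_iv.
rewrite (eq_big_nat _ _ (F2 := fun _ => ((rs * w)%:R)^-1)); last first.
  by move=> i; rewrite /assign => ->.
rewrite sumr_const_nat addKn.
have [->|rs_neq0] := eqVneq rs 0%N; first by rewrite mulr0n.
by rewrite natrM -[_ *+ rs]mulr_natl invfM mulrA mulfV ?mul1r // pnatr_eq0.
Qed.

Section Construction.
Variables n h w c : nat.

Lemma first_node_invariant_step (y : nat -> rat) (v : nat) : (1 <= v)%N ->
  gfun h w c (v - 1) <= ypre y v ->
  let rs := rstar h w c y v in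
  gfun h w c (v + rs - 1) <= ypre (assign w y v rs) (v + rs).
Proof.
move=> v_ge1 le_gy /=; rewrite ypre_assign // /rstar.
case: ifP => [rule_next|_]; first exact: rule_next.
have [->|_] := eqVneq (rpar c h) 0%N; first by rewrite addn0 addr0.
exact: seg_rule_rpar.
Qed.

Lemma build_eq_below (fuel v : nat) (y : nat -> rat) (i : nat) :
  (i < v)%N -> (build n h w c fuel v y).1 i = y i.
Proof.
elim: fuel v y => [|fuel IH] v y lt_iv //=.
case: ifP => // _ /=.
by rewrite IH ?(leq_trans lt_iv (leq_addr _ _)) // /assign leqNgt lt_iv.
Qed.

Lemma mem_build_bounds (fuel v : nat) (y : nat -> rat) (u : nat) :
  u \in (build n h w c fuel v y).2 -> (v <= u <= n - 2)%N.
Proof.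
elim: fuel v y => [|fuel IH] v y //=.
case: ifP => // v_le /=; rewrite inE => /orP[/eqP ->|/IH /andP[le_vu ->]].
  by rewrite leqnn leqNgt v_le.
by rewrite (leq_trans (leq_addr _ _) le_vu).
Qed.

Lemma build_first_node_invariant (fuel v : nat) (y : nat -> rat) : (1 <= v)%N ->
  gfun h w c (v - 1) <= ypre y v ->
  forall u, u \in (build n h w c fuel v y).2 ->
    gfun h w c (u - 1) <= ypre (build n h w c fuel v y).1 u.
Proof.
elim: fuel v y => [|fuel IH] v y v_ge1 le_gy u //=.
case: ifP => // _ /=; rewrite inE => /orP[/eqP ->|mem_u].
  rewrite /ypre (eq_big_nat _ _ (F2 := y)) //.
  move=> i /andP[_ lt_iv].
  by rewrite build_eq_below ?(leq_trans lt_iv (leq_addr _ _)) // /assign leqNgt lt_iv.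
apply: IH mem_u; first exact: leq_trans v_ge1 (leq_addr _ _).
exact: first_node_invariant_step.
Qed.

Lemma ypre_hider_y (u : nat) : (u <= n - 2)%N ->
  ypre (hider_y n h w c) u = ypre (build n h w c n 1 (fun _ => 0)).1 u.
Proof.
move=> le_u; apply: eq_big_nat => i /andP[i_ge1 lt_iu].
by rewrite /hider_y i_ge1 (leq_trans (ltnW lt_iu) le_u).
Qed.

Lemma first_nodes_invariant (u : nat) : u \in first_nodes n h w c ->
  (1 <= u)%N /\ gfun h w c (u - 1) <= ypre (hider_y n h w c) u.
Proof.
move=> mem_u; have /mem_build_bounds /andP[u_ge1 le_u] := mem_u.
split=> //; rewrite ypre_hider_y //.
apply: build_first_node_invariant mem_u => //.
by rewrite /gfun /ypre big_geq // !mul0r.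
Qed.

End Construction.

Theorem lemma3p4 (k n h w : nat) :
  (2 <= k)%N -> (2 ^ k < n)%N -> coprime (2 ^ k - 2) (n - 1) ->
  (0 < h)%N -> (1 <= w)%N -> (w <= n - 2)%N ->
  (h * (n - 1) = w * (2 ^ k - 2) + 1)%N ->
  (forall h' w' : nat, (0 < h')%N -> (1 <= w')%N -> (w' <= n - 2)%N ->
      (h' * (n - 1) = w' * (2 ^ k - 2) + 1)%N -> (w <= w')%N) ->
  forall v : nat, v \in first_nodes n h w (2 ^ k - 2) ->
    gfun h w (2 ^ k - 2) (v - 1) <= ypre (hider_y n h w (2 ^ k - 2)) v /\
    gfun h w (2 ^ k - 2) (v + rpar (2 ^ k - 2) h - 1)
      <= ypre (hider_y n h w (2 ^ k - 2)) v + (w%:R)^-1.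
Proof.
move=> _ _ _ _ _ _ _ _ v /first_nodes_invariant[v_ge1 le_gy].
by split; last exact: seg_rule_rpar.
Qed.
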